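(* Let $\Phi=(A;\{E_i\}_{i=0}^d;A^*;\{E^*_i\}_{i=0}^d)$ be a tridiagonal system on $V$ with $d\ge1$, such that $(A,A^* )$ satisfies the $q$-Serre relations, with $E_iV$ the eigenspace of $A$ for $\theta_i=q^{2i-d}$ and $E^*_iV$ the eigenspace of $A^*$ for $\theta^*_i=q^{d-2i}$. Let $\{U_i\}_{i=0}^d$ be its split decomposition, $K:V\to V$ the linear map acting on $U_i$ as $q^{d-2i}I$, $t$ a scalar, $B=A$, $B^*=tA^*+(1-t)K$, and $E'_i$ the primitive idempotent of $B^*$ for $\theta^*_i$. Then for $0\le i\le d$, $$B^*E_iV\subseteq E_{i-1}V+E_iV+E_{i+1}V\quad(E_{-1}=E_{d+1}=0),\qquad BE'_iV\subseteq E'_{i-1}V+E'_iV+E'_{i+1}V\quad(E'_{-1}=E'_{d+1}=0).$$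
   Context: $\mathcal K$ is an algebraically closed field; $V$ is a nonzero finite-dimensional vector space over $\mathcal K$; $q\in\mathcal K$ is nonzero and not a root of unity; $[3]_q=q^2+1+q^{-2}$. The $q$-Serre relations for $(X,Y)$: $X^3Y-[3]_qX^2YX+[3]_qXYX^2-YX^3=0$ and $Y^3X-[3]_qY^2XY+[3]_qYXY^2-XY^3=0$. Primitive idempotent of a diagonalizable $X$ for eigenvalue $\lambda_i$: $\prod_{j\ne i}\frac{X-\lambda_jI}{\lambda_i-\lambda_j}$. A tridiagonal system on $V$ is a sequence $(A;\{E_i\}_{i=0}^d;A^*;\{E^*_i\}_{i=0}^d)$ with $A,A^*$ diagonalizable, $\{E_i\}$, $\{E^*_i\}$ orderings of their primitive idempotents, $E_iA^*E_j=0$ and $E^*_iAE^*_j=0$ when $|i-j|>1$, and no subspaces other than $0,V$ invariant under both $A$ and $A^*$. Split decomposition: $U_i=(E^*_0V+\cdots+E^*_iV)\cap(E_iV+\cdots+E_dV)$; known: $V=U_0\oplus\cdots\oplus U_d$, $(A-\theta_iI)U_i\subseteq U_{i+1}$, $(A^*-\theta^*_iI)U_i\subseteq U_{i-1}$ ($U_{-1}=U_{d+1}=0$). It is a fact (proved in the paper) that $B^*$ is diagonalizable with eigenvalues $\theta^*_0,\dots,\theta^*_d$, so $E'_i$ is defined. *)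

(* Linear maps on V = K^n are n x n matrices acting on ROW
   vectors (v |-> v *m M), subspaces are row spaces (mxalgebra %MS). *)
From HB Require Import structures.
From mathcomp Require Import all_boot all_order all_algebra.
Set Implicit Arguments. Unset Strict Implicit. Unset Printing Implicit Defensive.
Import Order.TTheory GRing.Theory Num.Theory.
Local Open Scope ring_scope.

Definition prim_idem (K : fieldType) (n d : nat) (X : 'M[K]_n)
  (th : 'I_d.+1 -> K) (i : 'I_d.+1) : 'M[K]_n :=
  \prod_(j < d.+1 | j != i) ((th i - th j)^-1 *: (X - (th j)%:M)).

Definition tridiagonal_system (K : fieldType) (n d : nat) (A As : 'M[K]_n)
  (th ths : 'I_d.+1 -> K) (E Es : 'I_d.+1 -> 'M[K]_n) : Prop :=
  [/\ diagonalizable A /\ diagonalizable As,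
      injective th /\ injective ths,
      (forall a, eigenvalue A a <-> exists i, a = th i) /\
      (forall a, eigenvalue As a <-> exists i, a = ths i),
      (forall i, E i = prim_idem A th i) /\ (forall i, Es i = prim_idem As ths i) /\
      (forall i j : 'I_d.+1, ((i.+1 < j)%N || (j.+1 < i)%N) ->
          E i *m As *m E j = 0 /\ Es i *m A *m Es j = 0)
    & (forall W : 'M[K]_n, stablemx W A -> stablemx W As ->
          (W == (0 : 'M[K]_n))%MS \/ (W == (1%:M : 'M[K]_n))%MS)].

Definition q_serre (K : fieldType) (n : nat) (q : K) (X Y : 'M[K]_n) : Prop :=
  let q3 := q ^+ 2 + 1 + q ^- 2 in
  X ^+ 3 *m Y - q3 *: (X ^+ 2 *m Y *m X) + q3 *: (X *m Y *m X ^+ 2) - Y *m X ^+ 3 = 0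
  /\ Y ^+ 3 *m X - q3 *: (Y ^+ 2 *m X *m Y) + q3 *: (Y *m X *m Y ^+ 2) - X *m Y ^+ 3 = 0.

Definition split_comp (K : fieldType) (n d : nat) (E Es : 'I_d.+1 -> 'M[K]_n)
  (i : 'I_d.+1) : 'M[K]_n :=
  ((\sum_(j < d.+1 | (j <= i)%N) Es j) :&: (\sum_(j < d.+1 | (i <= j)%N) E j))%MS.

Definition nbr_sum (K : fieldType) (n d : nat) (E : 'I_d.+1 -> 'M[K]_n)
  (i : 'I_d.+1) : 'M[K]_n :=
  (\sum_(j < d.+1 | (i <= j.+1)%N && (j <= i.+1)%N) E j)%MS.

(* Let U_0, ..., U_d be the split decomposition.  Their sum is invariant under
   A and A* (A - th_i maps U_i into U_(i+1), A* - th*_i maps U_i into U_(i-1))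
   and contains E*_0 V, so by irreducibility it is V.  As K acts on U_i as
   th*_i = q^(d-2i), comparing both sides on each U_i gives
     A K - q^-2 K A = (1 - q^-2) I   and   A* K - q^2 K A* = (1 - q^2) K^2.
   Sandwiching the first relation between the idempotents E_i, E_j of A gives
   E_i K E_j = 0 for |i - j| > 1, hence the first inclusion.  Between the
   idempotents F_k of K the same relations make A upper and A* lower
   bidiagonal, with diagonals th_i and th*_i.  Hence for t <> 0, conjugating by
   G = sum_k t^-k F_k turns A* into B* and A into t A + (1 - t) K^-1, so that
   E'_i = G^-1 E*_i G; and E*_i K^-1 E*_j = 0 for |i - j| > 1 because
   K^-1 A* - q^2 A* K^-1 is scalar.  For t = 0, B* = K and the bidiagonality of
   A suffices. *)

From HB Require Import structures.
From mathcomp Require Import all_boot all_order all_algebra.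
From mathcomp Require Import zify ring.
Set Implicit Arguments. Unset Strict Implicit. Unset Printing Implicit Defensive.
Import Order.TTheory GRing.Theory Num.Theory.
Local Open Scope ring_scope.

Lemma eq_on_full_sumsmx (F : fieldType) n (I : finType) (W : I -> 'M[F]_n)
    (M N : 'M[F]_n) :
  (\sum_i W i :=: 1%:M)%MS -> (forall i, W i *m M = W i *m N) -> M = N.
Proof.
move=> fullW eqMN; apply/eqP; rewrite -subr_eq0 -submx0.
have full1 : (1%:M <= \sum_i W i)%MS by rewrite fullW.
have := submxMr (M - N) full1; rewrite mul1mx sumsmxMr big1 // => i _.
by rewrite mulmxBr eqMN subrr.
Qed.

Lemma horner_mx_eigen (F : fieldType) n m (X : 'M[F]_n.+1) (Y : 'M[F]_(m, n.+1))
    a (p : {poly F}) :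
  Y *m X = a *: Y -> Y *m horner_mx X p = p.[a] *: Y.
Proof.
move=> YX; elim/poly_ind: p => [|p c IHp].
  by rewrite rmorph0 mulmx0 horner0 scale0r.
rewrite rmorphD rmorphM /= horner_mx_X horner_mx_C hornerMXaddC.
rewrite mulmxDr -mulmxE mulmxA IHp -scalemxAl YX scalerA.
by rewrite mul_mx_scalar scalerDl.
Qed.

Section Lagrange.
Variables (F : fieldType) (d : nat) (c : 'I_d.+1 -> F).

Definition lagrange_poly (i : 'I_d.+1) : {poly F} :=
  \prod_(j < d.+1 | j != i) ((c i - c j)^-1 *: ('X - (c j)%:P)).

Definition eigval_poly : {poly F} := \prod_(k < d.+1) ('X - (c k)%:P).

Lemma eigval_poly_root k : eigval_poly.[c k] = 0.
Proof. by rewrite horner_prod (bigD1 k) //= hornerXsubC subrr mul0r. Qed.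

Lemma size_lagrange_poly i : (size (lagrange_poly i) <= d.+1)%N.
Proof.
rewrite /lagrange_poly scaler_prod; apply: leq_trans (size_scale_leq _ _) _.
rewrite -big_filter size_prod_XsubC ltnS size_filter.
by rewrite -sum1_count sum1_card cardC1 card_ord.
Qed.

Hypothesis c_inj : injective c.

Lemma lagrange_poly_eval i k : (lagrange_poly i).[c k] = (i == k)%:R.
Proof.
rewrite /lagrange_poly horner_prod; have [<-|neq_ik] := eqVneq i k.
  rewrite big1 // => j neq_ji; rewrite hornerZ hornerXsubC mulVf // subr_eq0.
  by apply: contra neq_ji => /eqP/c_inj ->.
by rewrite (bigD1 k) 1?eq_sym //= hornerZ hornerXsubC subrr mulr0 mul0r.
Qed.

Lemma sum_lagrange_poly : \sum_i lagrange_poly i = 1.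
Proof.
apply/eqP; rewrite -subr_eq0; apply/eqP.
apply: (@roots_geq_poly_eq0 _ _ [seq c k | k <- enum 'I_d.+1]).
- apply/allP => _ /mapP [k _ ->]; rewrite /root hornerD hornerN horner_sum hornerC.
  rewrite (bigD1 k) //= lagrange_poly_eval // eqxx big1 ?addr0 ?subrr //.
  by move=> j /negPf; rewrite lagrange_poly_eval => ->.
- by rewrite map_inj_uniq ?enum_uniq.
- rewrite size_map size_enum_ord; apply: leq_trans (size_polyD _ _) _.
  rewrite geq_max size_polyN size_poly1 andbT; apply: leq_trans (size_sum _ _ _) _.
  by apply/bigmax_leqP => i _; apply: size_lagrange_poly.
Qed.

End Lagrange.

Record eigen_resolution (F : fieldType) (n d : nat) (X : 'M[F]_n)
    (c : 'I_d.+1 -> F) (Q : 'I_d.+1 -> 'M[F]_n) : Prop := EigenResolution {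
  sum_idem : \sum_i Q i = 1%:M;
  mul_idem : forall i j, Q i *m Q j = (i == j)%:R *: Q i;
  idem_eigen : forall i, Q i *m X = c i *: Q i;
  eigen_idem : forall i, X *m Q i = c i *: Q i }.

Section PrimitiveIdempotents.
Variables (F : fieldType) (n d : nat) (X : 'M[F]_n.+1) (c : 'I_d.+1 -> F).

Lemma prim_idem_horner i : prim_idem X c i = horner_mx X (lagrange_poly c i).
Proof.
rewrite /prim_idem /lagrange_poly rmorph_prod; apply: eq_bigr => j _.
by rewrite [RHS]/= horner_mxZ rmorphB /= horner_mx_X horner_mx_C.
Qed.

Lemma diagonalizable_eigval_poly :
  diagonalizable X -> (forall a, eigenvalue X a -> exists i, a = c i) ->
  horner_mx X (eigval_poly c) = 0.
Proof.
move=> /diagonalizablePeigen [rs _ full_rs] eigval_c.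
rewrite (big_nth 0) big_mkord in full_rs.
apply: (eq_on_full_sumsmx full_rs) => i; rewrite mulmx0.
have /horner_mx_eigen-> : eigenspace X rs`_i *m X = rs`_i *: eigenspace X rs`_i.
  exact/eigenspaceP.
have [-> | /eigval_c [k ->]] := eqVneq (eigenspace X rs`_i) 0; first by rewrite scaler0.
by rewrite eigval_poly_root scale0r.
Qed.

Hypothesis c_inj : injective c.

Lemma sum_prim_idem : \sum_i prim_idem X c i = 1%:M.
Proof.
under eq_bigr => i _ do rewrite prim_idem_horner.
by rewrite -rmorph_sum sum_lagrange_poly // rmorph1.
Qed.

Lemma prim_idem_neq0 i : eigenvalue X (c i) -> prim_idem X c i != 0.
Proof.
rewrite /eigenvalue; set V := eigenspace X (c i) => nzV.
have VX : V *m X = c i *: V by apply/eigenspaceP.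
have VP : V *m prim_idem X c i = V.
  by rewrite prim_idem_horner (horner_mx_eigen _ VX) lagrange_poly_eval // eqxx scale1r.
by apply: contraNneq nzV => P0; rewrite -VP P0 mulmx0.
Qed.

Lemma prim_idem_resolution (Q : 'I_d.+1 -> 'M[F]_n.+1) :
  horner_mx X (eigval_poly c) = 0 -> (forall i, Q i = prim_idem X c i) ->
  eigen_resolution X c Q.
Proof.
move=> X_ann defQ.
have mulX i : X *m Q i = c i *: Q i.
  have factor : ('X - (c i)%:P) * lagrange_poly c i =
      (\prod_(j < d.+1 | j != i) (c i - c j)^-1) *: eigval_poly c.
    rewrite /lagrange_poly scaler_prod -scalerAr; congr (_ *: _).
    by rewrite /eigval_poly [RHS](bigD1 i).
  apply/eqP; rewrite -subr_eq0; apply/eqP.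
  have := congr1 (horner_mx X) factor.
  rewrite rmorphM /= rmorphB /= horner_mx_X horner_mx_C horner_mxZ X_ann scaler0.
  by rewrite defQ prim_idem_horner mulrBl -mulmxE mul_scalar_mx.
have Xmul i : Q i *m X = c i *: Q i.
  have : comm_mx X (Q i) by rewrite defQ prim_idem_horner; apply: comm_mx_horner.
  by rewrite /comm_mx => <-.
split=> // [|i j].
  by under eq_bigr => i _ do rewrite defQ; apply: sum_prim_idem.
by rewrite [Q j]defQ prim_idem_horner (horner_mx_eigen _ (Xmul i)) lagrange_poly_eval // eq_sym.
Qed.

Lemma eigen_resolution_prim_idem (Q : 'I_d.+1 -> 'M[F]_n.+1) :
  eigen_resolution X c Q -> forall i, Q i = prim_idem X c i.
Proof.
move=> res i; rewrite prim_idem_horner -[RHS]mul1mx -(sum_idem res) mulmx_suml.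
rewrite (bigD1 i) //= big1 => [|j neq_ji]; rewrite (horner_mx_eigen _ (idem_eigen res _)).
  by rewrite lagrange_poly_eval // eqxx scale1r addr0.
by rewrite lagrange_poly_eval // eq_sym (negPf neq_ji) scale0r.
Qed.

End PrimitiveIdempotents.

Section IdempotentDecomposition.
Variables (F : fieldType) (n d : nat) (Q : 'I_d.+1 -> 'M[F]_n).
Hypothesis sumQ : \sum_i Q i = 1%:M.

Lemma sub_sum_idem m (Y : 'M[F]_(m, n)) (S : pred 'I_d.+1) :
  (forall k, ~~ S k -> Y *m Q k = 0) -> (Y <= \sum_(k | S k) Q k)%MS.
Proof.
move=> YQ0; rewrite -[Y]mulmx1 -sumQ mulmx_sumr (bigID S) /= [X in _ + X]big1.
  by rewrite addr0; apply: summx_sub_sums => k _; apply: submxMl.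
by move=> k /YQ0.
Qed.

Lemma mulmx_sub_sum_idem m (Y : 'M[F]_(m, n)) (M : 'M[F]_n) (S S' : pred 'I_d.+1) :
  (Y <= \sum_(j | S j) Q j)%MS ->
  (forall j k, S j -> ~~ S' k -> Q j *m M *m Q k = 0) ->
  (Y *m M <= \sum_(k | S' k) Q k)%MS.
Proof.
move=> /sub_sumsmxP [u ->] QMQ0; apply: sub_sum_idem => k S'k.
rewrite !mulmx_suml big1 // => j Sj.
by rewrite -!mulmxA [Q j *m _]mulmxA QMQ0 // mulmx0.
Qed.

Lemma idem_sub_nbr_sum (M : 'M[F]_n) (i : 'I_d.+1) :
  (forall j : 'I_d.+1, (i.+1 < j)%N || (j.+1 < i)%N -> Q i *m M *m Q j = 0) ->
  (Q i *m M <= nbr_sum Q i)%MS.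
Proof.
move=> far0; apply: sub_sum_idem => j; rewrite negb_and -!ltnNge => far_ij.
by apply: far0; rewrite orbC.
Qed.

Lemma idem_mx_ext (M N : 'M[F]_n) :
  (forall i j, Q i *m M *m Q j = Q i *m N *m Q j) -> M = N.
Proof.
move=> eqMN; rewrite -[M]mul1mx -[N]mul1mx -[M]mulmx1 -[N]mulmx1 -sumQ.
rewrite !mulmx_suml; apply: eq_bigr => i _; rewrite !mulmx_sumr.
by apply: eq_bigr => j _; rewrite !mulmxA.
Qed.

Hypothesis mulQ : forall i j, Q i *m Q j = (i == j)%:R *: Q i.

Lemma mul_idem_neq i j : i != j -> Q i *m Q j = 0.
Proof. by move/negPf => neq_ij; rewrite mulQ neq_ij scale0r. Qed.

Lemma mul_idemm i : Q i *m Q i = Q i.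
Proof. by rewrite mulQ eqxx scale1r. Qed.

Definition idem_comb (a : 'I_d.+1 -> F) : 'M[F]_n := \sum_k a k *: Q k.

Lemma idem_mul_comb a i : Q i *m idem_comb a = a i *: Q i.
Proof.
rewrite mulmx_sumr (bigD1 i) //= -scalemxAr mul_idemm big1 ?addr0 // => k neq_ki.
by rewrite -scalemxAr mul_idem_neq 1?eq_sym // scaler0.
Qed.

Lemma idem_comb_mul a i : idem_comb a *m Q i = a i *: Q i.
Proof.
rewrite mulmx_suml (bigD1 i) //= -scalemxAl mul_idemm big1 ?addr0 // => k neq_ki.
by rewrite -scalemxAl mul_idem_neq // scaler0.
Qed.

Lemma idem_comb_mulmx a b :
  idem_comb a *m idem_comb b = idem_comb (fun k => a k * b k).
Proof.
rewrite {1}/idem_comb mulmx_suml; apply: eq_bigr => k _.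
by rewrite -scalemxAl idem_mul_comb scalerA.
Qed.

Lemma idem_comb1 : idem_comb (fun _ => 1) = 1%:M.
Proof. by rewrite -sumQ; apply: eq_bigr => k _; rewrite scale1r. Qed.

Lemma idem_sandwich_comb a b (M : 'M[F]_n) i j :
  Q i *m (idem_comb a *m M *m idem_comb b) *m Q j = (a i * b j) *: (Q i *m M *m Q j).
Proof.
rewrite !mulmxA idem_mul_comb -!scalemxAl -!mulmxA idem_comb_mul.
by rewrite -!scalemxAr scalerA !mulmxA.
Qed.

End IdempotentDecomposition.

Lemma eigen_idem_shift_eq0 (F : fieldType) n d (X : 'M[F]_n) c Q
    (res : eigen_resolution X c Q) (i j k : 'I_d.+1) :
  (j != k) || (k == i) -> Q j *m (X - (c i)%:M) *m Q k = 0.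
Proof.
rewrite -mulmxA mulmxBl (eigen_idem res) mul_scalar_mx -scalerBl -scalemxAr.
rewrite (mul_idem res); case: eqP => [-> /eqP-> | _ _]; last by rewrite !scale0r scaler0.
by rewrite subrr scale0r.
Qed.

Section EigenSandwich.
Variables (F : fieldType) (n : nat) (P1 P2 X M N : 'M[F]_n) (a1 a2 r : F).
Hypotheses (P1X : P1 *m X = a1 *: P1) (XP2 : X *m P2 = a2 *: P2).

Lemma eigen_sandwichl : P1 *m (X *m M) *m P2 = a1 *: (P1 *m M *m P2).
Proof. by rewrite mulmxA P1X -!scalemxAl. Qed.

Lemma eigen_sandwichr : P1 *m (M *m X) *m P2 = a2 *: (P1 *m M *m P2).
Proof. by rewrite mulmxA -mulmxA XP2 -scalemxAr. Qed.

Lemma eigen_sandwich_commr :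
  M *m X - r *: (X *m M) = N -> (a2 - r * a1) *: (P1 *m M *m P2) = P1 *m N *m P2.
Proof.
move=> <-; rewrite mulmxBr mulmxBl -scalemxAr -scalemxAl.
by rewrite eigen_sandwichl eigen_sandwichr scalerA scalerBl.
Qed.

Lemma eigen_sandwich_comml :
  X *m M - r *: (M *m X) = N -> (a1 - r * a2) *: (P1 *m M *m P2) = P1 *m N *m P2.
Proof.
move=> <-; rewrite mulmxBr mulmxBl -scalemxAr -scalemxAl.
by rewrite eigen_sandwichl eigen_sandwichr scalerA scalerBl.
Qed.

End EigenSandwich.

Lemma expfz_inj (F : fieldType) (q : F) :
  q != 0 -> (forall m : nat, (0 < m)%N -> q ^+ m != 1) -> injective (fun z : int => q ^ z).
Proof.
move=> q_neq0 q_nonroot a b /= eq_qab.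
have qab1 : q ^ (a - b) = 1 by rewrite expfzDr // eq_qab -expfzDr // subrr expr0z.
apply/eqP; rewrite -subr_eq0; apply/eqP; move: qab1.
case: (a - b) => [[|m]|m] //= qm1; have := q_nonroot m.+1 isT.
  by rewrite [q ^+ _]qm1 eqxx.
by move: qm1 => /eqP; rewrite invr_eq1 => /eqP->; rewrite eqxx.
Qed.

Lemma mulmx_shift_comm (F : fieldType) m n (Y W : 'M[F]_(m, n)) (M X : 'M[F]_n)
    (k b r : F) :
  Y *m X = k *: Y -> W *m X = (r * k) *: W -> Y *m M = W + b *: Y ->
  Y *m (M *m X - r *: (X *m M)) = ((1 - r) * b * k) *: Y.
Proof.
move=> YX WX YM; rewrite mulmxBr -scalemxAr !mulmxA YM YX -scalemxAl YM.
rewrite mulmxDl WX -scalemxAl YX !scalerDr !scalerA opprD addrACA.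
by rewrite subrr add0r -scalerBl; congr (_ *: _); ring.
Qed.

Section SplitDecomposition.
Variables (K : fieldType) (n d : nat) (q : K).
Variables (A As Km : 'M[K]_n.+1) (E Es : 'I_d.+1 -> 'M[K]_n.+1).
Local Notation th := (fun i : 'I_d.+1 => q ^ ((2 * i)%:Z - d%:Z)).
Local Notation ths := (fun i : 'I_d.+1 => q ^ (d%:Z - (2 * i)%:Z)).
Hypotheses (q_neq0 : q != 0) (qexp_inj : injective (fun z : int => q ^ z)).
Hypotheses (A_res : eigen_resolution A th E) (As_res : eigen_resolution As ths Es).
Hypothesis E_As_E :
  forall i j : 'I_d.+1, (i.+1 < j)%N || (j.+1 < i)%N -> E i *m As *m E j = 0.
Hypothesis Es_A_Es :
  forall i j : 'I_d.+1, (i.+1 < j)%N || (j.+1 < i)%N -> Es i *m A *m Es j = 0.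
Hypothesis irreducible : forall W : 'M[K]_n.+1,
  stablemx W A -> stablemx W As ->
  (W == (0 : 'M[K]_n.+1))%MS \/ (W == (1%:M : 'M[K]_n.+1))%MS.
Hypothesis Es0_neq0 : Es ord0 != 0.
Hypothesis Km_split : forall (i : 'I_d.+1) (v : 'rV[K]_n.+1),
  (v <= split_comp E Es i)%MS -> v *m Km = ths i *: v.

(* Indexed by [int], so that U_(-1) = U_(d+1) = 0 without special cases. *)
Definition splitU (k : int) : 'M[K]_n.+1 :=
  ((\sum_(j < d.+1 | (j%:Z <= k)%R) Es j) :&: (\sum_(j < d.+1 | (k <= j%:Z)%R) E j))%MS.

Lemma splitU_ord_or_eq0 (k : int) : (exists i : 'I_d.+1, k = i) \/ splitU k = 0.
Proof.
have [[m ->]|kneg] : (exists m : nat, k = m) \/ k < 0.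
- by case: k => m; [left; exists m | right].
- have [le_md|lt_dm] := leqP m d; first by left; exists (inord m); rewrite inordK.
  right; rewrite /splitU [X in (_ :&: X)%MS]big_pred0 ?capmx0 // => j /=.
  by apply/negbTE; rewrite -ltNge; have := ltn_ord j; lia.
right; rewrite /splitU big_pred0 ?cap0mx // => j /=.
by apply/negbTE; rewrite -ltNge; lia.
Qed.

Lemma splitU_sub_sum k : (splitU k <= \sum_(i < d.+1) splitU i)%MS.
Proof. by case: (splitU_ord_or_eq0 k) => [[i ->]|->]; [apply: sumsmx_sup | apply: sub0mx]. Qed.

Lemma splitU_ord (i : 'I_d.+1) : splitU i = split_comp E Es i.
Proof. by congr (_ :&: _)%MS; apply: eq_bigl => j; rewrite lez_nat. Qed.

Lemma splitU_Km k m (Y : 'M[K]_(m, n.+1)) :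
  (Y <= splitU k)%MS -> Y *m Km = q ^ (d%:Z - 2 * k) *: Y.
Proof.
case: (splitU_ord_or_eq0 k) => [[i ->]|->]; last first.
  by rewrite submx0 => /eqP->; rewrite mul0mx scaler0.
rewrite splitU_ord => sub_Yi; apply/row_matrixP => r; rewrite row_mul linearZ /=.
by rewrite -PoszM; apply: Km_split; apply: submx_trans (row_sub r Y) sub_Yi.
Qed.

Lemma splitU_raise (i : 'I_d.+1) :
  (splitU i *m (A - (th i)%:M) <= splitU (i%:Z + 1))%MS.
Proof.
rewrite /splitU sub_capmx; apply/andP; split.
  apply: (mulmx_sub_sum_idem (sum_idem As_res) (capmxSl _ _)) => j k le_ji lt_k.
  rewrite mulmxBr mulmxBl mul_mx_scalar -scalemxAl Es_A_Es; last by lia.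
  rewrite (mul_idem_neq (mul_idem As_res)) ?scaler0 ?subr0 //.
  by apply/eqP => /(congr1 val) /=; lia.
apply: (mulmx_sub_sum_idem (sum_idem A_res) (capmxSr _ _)) => j k le_ij lt_k.
apply: (eigen_idem_shift_eq0 A_res); case: eqVneq => //= eq_jk; subst k.
by apply/eqP/ord_inj; lia.
Qed.

Lemma splitU_lower (i : 'I_d.+1) :
  (splitU i *m (As - (ths i)%:M) <= splitU (i%:Z - 1))%MS.
Proof.
rewrite /splitU sub_capmx; apply/andP; split.
  apply: (mulmx_sub_sum_idem (sum_idem As_res) (capmxSl _ _)) => j k le_ji lt_k.
  apply: (eigen_idem_shift_eq0 As_res); case: eqVneq => //= eq_jk; subst k.
  by apply/eqP/ord_inj; lia.
apply: (mulmx_sub_sum_idem (sum_idem A_res) (capmxSr _ _)) => j k le_ij lt_k.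
rewrite mulmxBr mulmxBl mul_mx_scalar -scalemxAl E_As_E; last by lia.
rewrite (mul_idem_neq (mul_idem A_res)) ?scaler0 ?subr0 //.
by apply/eqP => /(congr1 val) /=; lia.
Qed.

Lemma sum_splitU_full : (\sum_(i < d.+1) splitU i :=: 1%:M)%MS.
Proof.
have W_stable (M : 'M[K]_n.+1) (c : 'I_d.+1 -> K) (s : int) :
    (forall i : 'I_d.+1, (splitU i *m (M - (c i)%:M) <= splitU (i%:Z + s))%MS) ->
    stablemx (\sum_(i < d.+1) splitU i) M.
  move=> shift; rewrite sumsmxMr; apply/sumsmx_subP => i _.
  rewrite -[splitU i *m M](subrK (splitU i *m (c i)%:M)) -mulmxBr.
  apply: addmx_sub; first exact: submx_trans (shift i) (splitU_sub_sum _).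
  by rewrite mul_mx_scalar scalemx_sub ?splitU_sub_sum.
have [/andP [W_le0 _]|/eqmxP //] :=
  irreducible (W_stable A th 1 splitU_raise) (W_stable As ths (-1) splitU_lower).
have Es0_le_U0 : (Es ord0 <= splitU 0)%MS.
  rewrite sub_capmx (sumsmx_sup ord0) //=.
  by apply: (sub_sum_idem (sum_idem A_res)) => k; rewrite lez_nat.
have := submx_trans Es0_le_U0 (submx_trans (splitU_sub_sum 0) W_le0).
by rewrite submx0 (negPf Es0_neq0).
Qed.

Lemma th_ths (i : 'I_d.+1) : th i * ths i = 1.
Proof. by rewrite -expfzDr // (_ : _ + _ = 0) ?expr0z //; lia. Qed.

Lemma splitU_Km_ths (i : 'I_d.+1) m (Y : 'M[K]_(m, n.+1)) :
  (Y <= splitU i)%MS -> Y *m Km = ths i *: Y.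
Proof. by move/splitU_Km->; rewrite PoszM. Qed.

Lemma A_Km_comm : A *m Km - q ^ (-2) *: (Km *m A) = (1 - q ^ (-2)) *: 1%:M.
Proof.
apply: (eq_on_full_sumsmx sum_splitU_full) => i.
rewrite -scalemxAr mulmx1 (mulmx_shift_comm (k := ths i) (b := th i)
  (W := splitU i *m (A - (th i)%:M))).
- by rewrite -mulrA th_ths mulr1.
- exact: splitU_Km_ths.
- move: (splitU_raise i) => /splitU_Km->.
  by rewrite -expfzDr //; congr (_ ^ _ *: _); lia.
- by rewrite mulmxBr mul_mx_scalar subrK.
Qed.

Lemma As_Km_comm : As *m Km - q ^ 2 *: (Km *m As) = (1 - q ^ 2) *: (Km *m Km).
Proof.
apply: (eq_on_full_sumsmx sum_splitU_full) => i.
rewrite -scalemxAr mulmxA !(splitU_Km_ths (submx_refl _)) -scalemxAl.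
rewrite (splitU_Km_ths (submx_refl _)) (mulmx_shift_comm (k := ths i) (b := ths i)
  (W := splitU i *m (As - (ths i)%:M))).
- by rewrite !scalerA.
- exact: splitU_Km_ths.
- move: (splitU_lower i) => /splitU_Km->.
  by rewrite -expfzDr //; congr (_ ^ _ *: _); lia.
- by rewrite mulmxBr mul_mx_scalar subrK.
Qed.

Lemma ths_inj : injective ths.
Proof. by move=> i j /qexp_inj eq_ij; apply: ord_inj; lia. Qed.

Lemma qexp_scale_eq0 (a b : int) m p (M : 'M[K]_(m, p)) :
  (q ^ a - q ^ b) *: M = 0 -> a != b -> M = 0.
Proof.
move/eqP; rewrite scaler_eq0 subr_eq0 => /orP [/eqP/qexp_inj-> | /eqP //].
by rewrite eqxx.
Qed.

Lemma one_sub_qexp_neq0 (a : int) : a != 0 -> 1 - q ^ a != 0.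
Proof. by apply: contraNneq => /eqP; rewrite subr_eq0 -(expr0z q) => /eqP/qexp_inj->. Qed.

Lemma Km_eigval_poly : horner_mx Km (eigval_poly ths) = 0.
Proof.
apply: (eq_on_full_sumsmx sum_splitU_full) => i.
by rewrite mulmx0 (horner_mx_eigen _ (splitU_Km_ths (submx_refl _))) eigval_poly_root scale0r.
Qed.

Local Notation F := (prim_idem Km ths).

Lemma Km_res : eigen_resolution Km ths F.
Proof. exact: (prim_idem_resolution ths_inj Km_eigval_poly (fun i => erefl (F i))). Qed.

Lemma F_Km_F i j : F i *m Km *m F j = ths j *: (F i *m F j).
Proof. by rewrite -mulmxA (eigen_idem Km_res) -scalemxAr. Qed.

Lemma F_A_F_eq0 (i j : 'I_d.+1) : j != i -> (j : nat) != i.+1 -> F i *m A *m F j = 0.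
Proof.
move=> neq_ji neq_jSi.
have := eigen_sandwich_commr (idem_eigen Km_res i) (eigen_idem Km_res j) A_Km_comm.
rewrite -scalemxAr mulmx1 -scalemxAl (mul_idem_neq (mul_idem Km_res)) 1?eq_sym //.
rewrite scaler0 -expfzDr // => /qexp_scale_eq0; apply.
by apply/eqP => eq_exp; apply/(negP neq_jSi)/eqP; lia.
Qed.

Lemma F_A_F_diag i : F i *m A *m F i = th i *: F i.
Proof.
have := eigen_sandwich_commr (idem_eigen Km_res i) (eigen_idem Km_res i) A_Km_comm.
rewrite -scalemxAr mulmx1 -scalemxAl (mul_idemm (mul_idem Km_res)).
rewrite -[X in X - _]mul1r -mulrBl -scalerA.
move/(scalerI (@one_sub_qexp_neq0 (-2) isT))/(congr1 (fun M => th i *: M)).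
by rewrite scalerA th_ths scale1r.
Qed.

Lemma F_As_F i j : (ths j - q ^ 2 * ths i) *: (F i *m As *m F j) =
  ((1 - q ^ 2) * ths i * ths j) *: (F i *m F j).
Proof.
rewrite (eigen_sandwich_commr (idem_eigen Km_res i) (eigen_idem Km_res j) As_Km_comm).
by rewrite -scalemxAr -scalemxAl mulmxA (idem_eigen Km_res) -!scalemxAl F_Km_F !scalerA.
Qed.

Lemma F_As_F_eq0 (i j : 'I_d.+1) : j != i -> (j.+1 != i)%N -> F i *m As *m F j = 0.
Proof.
move=> neq_ji neq_jSi; have := F_As_F i j.
rewrite (mul_idem_neq (mul_idem Km_res)) 1?eq_sym // scaler0 -expfzDr //.
move=> /qexp_scale_eq0; apply.
by apply/eqP => eq_exp; apply/(negP neq_jSi)/eqP; lia.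
Qed.

Lemma F_As_F_diag i : F i *m As *m F i = ths i *: F i.
Proof.
have := F_As_F i i; rewrite (mul_idemm (mul_idem Km_res)).
rewrite -[X in X - _]mul1r -mulrBl -scalerA.
by move/(scalerI (mulf_neq0 (@one_sub_qexp_neq0 2 isT) (expfz_neq0 _ q_neq0))).
Qed.

Lemma E_Km_E_eq0 (i j : 'I_d.+1) :
  (i.+1 < j)%N || (j.+1 < i)%N -> E i *m Km *m E j = 0.
Proof.
move=> far_ij; have := eigen_sandwich_comml (idem_eigen A_res i) (eigen_idem A_res j) A_Km_comm.
rewrite -scalemxAr mulmx1 -scalemxAl (mul_idem_neq (mul_idem A_res)); last first.
  by apply/eqP => eq_ij; move: far_ij; rewrite eq_ij !ltnNge !leqnSn.
rewrite scaler0 -expfzDr // => /qexp_scale_eq0; apply.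
by apply/eqP => eq_exp; move: far_ij; lia.
Qed.

Lemma E_Bs_sub_nbr_sum (t : K) i : (E i *m (t *: As + (1 - t) *: Km) <= nbr_sum E i)%MS.
Proof.
apply: (idem_sub_nbr_sum (sum_idem A_res)) => j far_ij.
by rewrite mulmxDr mulmxDl -!scalemxAr -!scalemxAl E_As_E // E_Km_E_eq0 // !scaler0 addr0.
Qed.

Local Notation H := (idem_comb F th).

Lemma H_Km : H *m Km = 1%:M.
Proof.
rewrite mulmx_suml -(sum_idem Km_res); apply: eq_bigr => k _.
by rewrite -scalemxAl (idem_eigen Km_res) scalerA th_ths scale1r.
Qed.

Lemma Km_H : Km *m H = 1%:M.
Proof.
rewrite mulmx_sumr -(sum_idem Km_res); apply: eq_bigr => k _.
by rewrite -scalemxAr (eigen_idem Km_res) scalerA th_ths scale1r.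
Qed.

Lemma H_As_comm : H *m As - q ^ 2 *: (As *m H) = (1 - q ^ 2) *: 1%:M.
Proof.
have := congr1 (fun M => H *m M *m H) As_Km_comm.
rewrite /= mulmxBr mulmxBl -!scalemxAr -!scalemxAl !mulmxA H_Km mul1mx.
by rewrite -!mulmxA Km_H !mulmx1.
Qed.

Lemma Es_H_Es_eq0 (i j : 'I_d.+1) :
  (i.+1 < j)%N || (j.+1 < i)%N -> Es i *m H *m Es j = 0.
Proof.
move=> far_ij; have := eigen_sandwich_commr (idem_eigen As_res i) (eigen_idem As_res j) H_As_comm.
rewrite -scalemxAr mulmx1 -scalemxAl (mul_idem_neq (mul_idem As_res)); last first.
  by apply/eqP => eq_ij; move: far_ij; rewrite eq_ij !ltnNge !leqnSn.
rewrite scaler0 -expfzDr // => /qexp_scale_eq0; apply.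
by apply/eqP => eq_exp; move: far_ij; lia.
Qed.

Section Conjugation.
Variable t : K.
Hypothesis t_neq0 : t != 0.
Local Notation G := (idem_comb F (fun k => (t ^+ k)^-1)).
Local Notation G' := (idem_comb F (fun k => t ^+ k)).
Local Notation Bs := (t *: As + (1 - t) *: Km).

Lemma conj_G_As : G' *m As *m G = Bs.
Proof.
apply: (idem_mx_ext (sum_idem Km_res)) => i j.
rewrite (idem_sandwich_comb (mul_idem Km_res)) mulmxDr mulmxDl -!scalemxAr -!scalemxAl F_Km_F.
have [->|neq_ji] := eqVneq j i.
  rewrite F_As_F_diag (mul_idemm (mul_idem Km_res)) mulfV ?expf_neq0 // scale1r.
  by rewrite !scalerA -scalerDl; congr (_ *: _); ring.
rewrite (mul_idem_neq (mul_idem Km_res)) 1?eq_sym // !scaler0 addr0.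
have [eq_jSi|neq_jSi] := eqVneq j.+1 i; last by rewrite F_As_F_eq0 // !scaler0.
by rewrite -eq_jSi exprS mulfK ?expf_neq0.
Qed.

Lemma conj_G_A : G *m A *m G' = t *: A + (1 - t) *: H.
Proof.
apply: (idem_mx_ext (sum_idem Km_res)) => i j.
rewrite (idem_sandwich_comb (mul_idem Km_res)) mulmxDr mulmxDl -!scalemxAr -!scalemxAl.
rewrite -[F i *m H *m F j]mulmxA (idem_comb_mul (mul_idem Km_res)) -scalemxAr.
have [->|neq_ji] := eqVneq j i.
  rewrite F_A_F_diag (mul_idemm (mul_idem Km_res)) mulVf ?expf_neq0 // scale1r.
  by rewrite !scalerA -scalerDl; congr (_ *: _); ring.
rewrite (mul_idem_neq (mul_idem Km_res)) 1?eq_sym // !scaler0 addr0.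
have [eq_jSi|neq_jSi] := eqVneq (j : nat) i.+1; last by rewrite F_A_F_eq0 // !scaler0.
by rewrite eq_jSi exprS mulrCA mulVf ?mulr1 ?expf_neq0.
Qed.

Lemma prim_idem_Bs_conj i : prim_idem Bs ths i = G' *m Es i *m G.
Proof.
have G_G' : G *m G' = 1%:M.
  rewrite (idem_comb_mulmx (mul_idem Km_res)) -(idem_comb1 (sum_idem Km_res)).
  by apply: eq_bigr => k _; rewrite mulVf ?expf_neq0.
have [unit_G _] := mulmx1_unit G_G'.
have invG : invmx G = G' by rewrite -[G']mul1mx -(mulVmx unit_G) -mulmxA G_G' mulmx1.
rewrite -conj_G_As -invG !prim_idem_horner horner_mx_uconjC //.
by rewrite -prim_idem_horner -(eigen_resolution_prim_idem ths_inj As_res).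
Qed.

Lemma prim_idem_Bs_A_eq0 (i j : 'I_d.+1) : (i.+1 < j)%N || (j.+1 < i)%N ->
  prim_idem Bs ths i *m A *m prim_idem Bs ths j = 0.
Proof.
move=> far_ij; rewrite !prim_idem_Bs_conj.
have -> : G' *m Es i *m G *m A *m (G' *m Es j *m G) =
    G' *m (Es i *m (G *m A *m G') *m Es j) *m G by rewrite !mulmxA.
rewrite conj_G_A mulmxDr mulmxDl -!scalemxAr -!scalemxAl Es_A_Es // Es_H_Es_eq0 //.
by rewrite !scaler0 addr0 mulmx0 mul0mx.
Qed.

End Conjugation.

Lemma prim_idem_Bs_A_sub_nbr_sum (t : K) i :
  (prim_idem (t *: As + (1 - t) *: Km) ths i *m A <=
     nbr_sum (prim_idem (t *: As + (1 - t) *: Km) ths) i)%MS.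
Proof.
apply: (idem_sub_nbr_sum (sum_prim_idem _ ths_inj)) => j far_ij.
have [->|t_neq0] := eqVneq t 0; last exact: prim_idem_Bs_A_eq0.
rewrite scale0r add0r subr0 scale1r; apply: F_A_F_eq0.
  by apply/eqP => eq_ji; move: far_ij; rewrite eq_ji !ltnNge !leqnSn.
by apply/eqP => eq_jSi; move: far_ij; rewrite eq_jSi ltnn ltnNge leqW.
Qed.

End SplitDecomposition.

Theorem lemma7p13 (K : closedFieldType) (n d : nat) (q t : K)
  (A As Kmat : 'M[K]_n) (E Es : 'I_d.+1 -> 'M[K]_n) :
  (0 < n)%N -> (1 <= d)%N ->
  q != 0 -> (forall m : nat, (0 < m)%N -> q ^+ m != 1) ->
  tridiagonal_system A As (fun i : 'I_d.+1 => q ^ ((2 * i)%:Z - d%:Z))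
    (fun i : 'I_d.+1 => q ^ (d%:Z - (2 * i)%:Z)) E Es ->
  q_serre q A As ->
  (forall (i : 'I_d.+1) (v : 'rV[K]_n), (v <= split_comp E Es i)%MS ->
      v *m Kmat = q ^ (d%:Z - (2 * i)%:Z) *: v) ->
  let B := A in
  let Bs := t *: As + (1 - t) *: Kmat in
  let Ep := prim_idem Bs (fun i : 'I_d.+1 => q ^ (d%:Z - (2 * i)%:Z)) in
  forall i : 'I_d.+1,
    (E i *m Bs <= nbr_sum E i)%MS /\ (Ep i *m B <= nbr_sum Ep i)%MS.
Proof.
case: n A As Kmat E Es => [|n] A As Km E Es // _ _ q_neq0 q_nonroot.
move=> [[diagA diagAs] [th_inj ths_inj] [eigA eigAs] [defE [defEs tri]] irr] _.
move=> Km_split B Bs Ep i.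
have A_res := prim_idem_resolution th_inj
  (diagonalizable_eigval_poly diagA (fun a => proj1 (eigA a))) defE.
have As_res := prim_idem_resolution ths_inj
  (diagonalizable_eigval_poly diagAs (fun a => proj1 (eigAs a))) defEs.
have Es0_neq0 : Es ord0 != 0.
  by rewrite defEs prim_idem_neq0 //; apply/eigAs; exists ord0.
have qexp_inj := expfz_inj q_neq0 q_nonroot.
have E_As_E i' j' far := proj1 (tri i' j' far).
have Es_A_Es i' j' far := proj2 (tri i' j' far).
split.
  exact: (E_Bs_sub_nbr_sum q_neq0 qexp_inj A_res As_res E_As_E Es_A_Es irr
    Es0_neq0 Km_split).
exact: (prim_idem_Bs_A_sub_nbr_sum q_neq0 qexp_inj A_res As_res E_As_E Es_A_Es
  irr Es0_neq0 Km_split).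
Qed.
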